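(* Consider the parallel sliding-window decoder applied to a decoding graph $G=(V,E)$ with positive edge weights, in which each window is decoded independently by a minimum-weight perfect matching (MWPM) inner decoder, and suppose the following consistency assumption holds: for any two adjacent (overlapping) windows with decoding graphs $G_1=(V_1,E_1)$, $G_2=(V_2,E_2)$ and inner-decoder corrections $C_1\subseteq E_1$, $C_2\subseteq E_2$, and for any $C_1'\subseteq C_1$ and $C_2'\subseteq C_2$, if $\partial C_1'=\partial C_2'$ then $C_1'=C_2'$. Then any physical error configuration $\mathcal{E}\subseteq E$ that causes this decoder to produce a non-trivial (non-empty) seam syndrome must have total weight at least $w_b/2$, where $w_b$ is the weighted buffer size.
   Context: A decoding graph $G=(V,E)$ is a (hyper)graph whose vertices are detectors and whose edges are independent physical error mechanisms; each edge $e$ carries a positive weight $w_e$ (more likely errors have smaller weight), and the weight of a set of edges is the sum of the weights of its edges. An error configuration $\mathcal{E}\subseteq E$ flips every detector incident to an odd number of its edges. For $C\subseteq E$, the boundary is $\partial C=\{v\in V : |\{e\in C : v\in e\}| \text{ is odd}\}$. Convention: ''virtual'' boundary vertices of the global decoding graph are not in $V$ (edges touching them are treated as edges of size one), so they never lie in any $\partial C$; however, the virtual vertices placed on the time boundary of an individual window are counted as vertices of that window and may lie in $\partial C$. Parallel sliding-window decoder: the edge set is partitioned into core regions; each window consists of a core region together with buffer regions around it, so adjacent windows overlap. Each window is decoded independently by the inner decoder, which, given the observed detection events in the window, outputs a correction $C_i\subseteq E_i$ whose boundary on the window's real vertices matches those detection events; for an MWPM inner decoder, $C_i$ has minimum total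 weight among all such edge sets. The corrections are restricted to the core regions and combined; the seam syndrome is the set of detection events at the seams between adjacent core regions that are left unexplained by the combined core corrections (i.e. that would have to be resolved by a subsequent merging step). The weighted buffer size $w_b$ is the shortest weighted distance, in a window's decoding graph, from a seam vertex to a virtual time-boundary vertex of that window. *)

From mathcomp Require Import all_boot all_order all_algebra.
Set Implicit Arguments.
Unset Strict Implicit.
Unset Printing Implicit Defensive.
Import Order.TTheory GRing.Theory Num.Theory.
Local Open Scope ring_scope.

Section SlidingWindow.
Variables (R : realFieldType) (V E I B : finType).
(* [inc e] : the (real) detectors of the global graph incident to edge e;
   virtual global boundary vertices are not in V. *)
Variable inc : E -> {set V}.
Variable w : E -> R.

Definition wsum (C : {set E}) : R := \sum_(e in C) w e.

Definition bdry (C : {set E}) : {set V} :=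
  [set v | odd #|[set e in C | v \in inc e]|].

Variable core : I -> {set E}.

Definition seam_of (i j : I) (v : V) : bool :=
  [&& i != j, [exists e in core i, v \in inc e] & [exists f in core j, v \in inc f]].

Definition seam_vertex (v : V) : bool := [exists i, exists j, seam_of i j v].

Definition adjacent (i j : I) : bool := [exists v, seam_of i j v].

(* ---- windows ----
   Window i has edge set [Ew i] (core + buffers), real vertices [Rv i], and
   its own virtual time-boundary vertices [inr (i, b)]; [tb i e] lists the
   time-boundary vertices that edge e is attached to in window i. *)
Variables (Ew : I -> {set E}) (Rv : I -> {set V}) (tb : I -> E -> {set B}).

Definition wvert := (V + (I * B))%type.

Definition winc (i : I) (e : E) : {set wvert} :=
  (@inl V (I * B)) @: (inc e :&: Rv i) :|: (fun b => @inr V (I * B) (i, b)) @: tb i e.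

Definition wbdry (i : I) (C : {set E}) : {set wvert} :=
  [set x | odd #|[set e in C | x \in winc i e]|].

Definition matching_graph : Prop :=
  (forall e, #|inc e| <= 2)%N /\ (forall i e, e \in Ew i -> #|winc i e| <= 2)%N.

Definition sliding_windows : Prop :=
  ((forall e, exists i, e \in core i) /\
      (forall i j e, e \in core i -> e \in core j -> i = j)) /\
  [/\
      (forall i, core i \subset Ew i),
      (forall i e, e \in core i -> inc e \subset Rv i),
      (forall i e v, v \in Rv i -> v \in inc e -> e \in Ew i) &
      (forall i e, e \in Ew i -> (tb i e != set0) = ~~ (inc e \subset Rv i))].

Definition window_valid (synd : {set V}) (i : I) (C : {set E}) : bool :=
  (C \subset Ew i) && [forall v in Rv i, (inl v \in wbdry i C) == (v \in synd)].

Definition mwpm_output (synd : {set V}) (i : I) (C : {set E}) : Prop :=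
  window_valid synd i C /\
  (forall C', window_valid synd i C' -> wsum C <= wsum C').

Definition combined (C : I -> {set E}) : {set E} := \bigcup_(i : I) (C i :&: core i).

Definition seam_syndrome (C : I -> {set E}) (err : {set E}) : {set V} :=
  [set v | seam_vertex v && ((v \in bdry (combined C)) != (v \in bdry err))].

Definition consistent (C : I -> {set E}) : Prop :=
  forall i j, adjacent i j ->
  forall C1 C2 : {set E}, C1 \subset C i -> C2 \subset C j ->
  wbdry i C1 = wbdry j C2 -> C1 = C2.

Fixpoint wwalk (i : I) (x : wvert) (p : seq (E * wvert)) : bool :=
  if p is (e, y) :: p' then
    [&& e \in Ew i, x \in winc i e, y \in winc i e & wwalk i y p']
  else true.

Definition walk_weight (p : seq (E * wvert)) : R := \sum_(ey <- p) w ey.1.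

(* [wb] is at most the weighted buffer size: every walk, in the decoding graph
   of window i, from a seam vertex of core i to a virtual time-boundary vertex
   of window i weighs at least wb.  (w_b is the infimum of these weights.) *)
Definition buffer_lower_bound (wb : R) : Prop :=
  forall (i : I) (s : V) (b : B) (p : seq (E * wvert)),
    seam_vertex s -> [exists e in core i, s \in inc e] ->
    wwalk i (inl s) p -> last (inl s) (map snd p) = inr (i, b) ->
    wb <= walk_weight p.

End SlidingWindow.

From mathcomp Require Import all_boot all_order all_algebra.
From mathcomp Require Import lra.
Set Implicit Arguments.
Unset Strict Implicit.
Unset Printing Implicit Defensive.
Import Order.TTheory GRing.Theory Num.Theory.
Local Open Scope ring_scope.

(* Suppose [err] weighs less than [wb / 2].  Every window correction is then
   lighter than [err], because [err] restricted to the window is an admissible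
   output; so the symmetric difference [D] of the corrections of two adjacent
   windows weighs less than [wb].  Grow the [D]-component of a seam vertex
   edge by edge: each of its vertices is reached from the seam by a walk no
   heavier than [D], so by the buffer bound the component never leaves the
   real detectors of either window.  Both corrections explain the syndrome on
   the component, so their parts inside it have equal window boundaries, and
   consistency makes them equal.  Hence all windows whose cores touch a seam
   vertex agree on its edges, and the combined correction explains the
   syndrome there. *)

Section Weights.
Variables (R : realFieldType) (E : finType) (w : E -> R).
Hypothesis w_ge0 : forall e, 0 <= w e.

Lemma wsum_ge0 (A : {set E}) : 0 <= wsum w A.
Proof. exact: sumr_ge0. Qed.

Lemma wsumS (A B : {set E}) : A \subset B -> wsum w A <= wsum w B.
Proof.
move=> sAB; rewrite [leRHS](big_setID A) /= (setIidPr sAB) lerDl.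
exact: wsum_ge0.
Qed.

Lemma wsumU (A B : {set E}) : wsum w (A :|: B) <= wsum w A + wsum w B.
Proof.
rewrite [leLHS](big_setID A) /= setUK setDUl setDv set0U lerD2l.
exact/wsumS/subsetDl.
Qed.

Lemma wsumU1 e (A : {set E}) : e \notin A -> wsum w (e |: A) = w e + wsum w A.
Proof. exact: big_setU1. Qed.

End Weights.

Section WindowGraphs.
Variables (R : realFieldType) (V E I B : finType).
Variables (inc : E -> {set V}) (w : E -> R).
Variables (Ew : I -> {set E}) (Rv : I -> {set V}) (tb : I -> E -> {set B}).

Lemma in_bdry_eq (A A' : {set E}) u :
  (forall e, u \in inc e -> (e \in A) = (e \in A')) ->
  (u \in bdry inc A) = (u \in bdry inc A').
Proof.
move=> eqA; rewrite !inE; congr (odd _); apply: eq_card => e; rewrite !inE.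
by case ue: (u \in inc e); rewrite ?andbF ?andbT ?eqA.
Qed.

Lemma bdryID (A U : {set E}) u :
  (u \in bdry inc A) = (u \in bdry inc (A :&: U)) (+) (u \in bdry inc (A :\: U)).
Proof.
rewrite !inE -oddD -(cardsID U [set e in A | u \in inc e]); congr (odd (_ + _)%N).
  by apply: eq_card => e; rewrite !inE andbAC.
by apply: eq_card => e; rewrite !inE andbA.
Qed.

Lemma winc_inl i e x :
  (inl x \in winc inc Rv tb i e) = (x \in inc e) && (x \in Rv i).
Proof.
rewrite /winc inE mem_imset ?inE; last by move=> a b [].
by case: (_ && _) => //=; apply/negP => /imsetP [].
Qed.

Lemma winc_inr i e j b :
  (inr (j, b) \in winc inc Rv tb i e) = (j == i) && (b \in tb i e).
Proof.
rewrite /winc inE; case: imsetP => [[] //|_] /=.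
apply/imsetP/andP => [[b' tb_b' [-> ->]] //|[/eqP -> tb_b]].
by exists b.
Qed.

Lemma wbdry_inl i A x : x \in Rv i ->
  (inl x \in wbdry inc Rv tb i A) = (x \in bdry inc A).
Proof.
move=> xR; rewrite /wbdry /bdry !in_set; congr (odd _); apply: eq_card => e.
by rewrite in_set [in RHS]in_set winc_inl xR andbT.
Qed.

Lemma notin_wbdry i (A : {set E}) x :
  (forall e, e \in A -> x \notin winc inc Rv tb i e) -> x \notin wbdry inc Rv tb i A.
Proof.
move=> Ax; rewrite inE (_ : [set e in A | _] = set0) ?cards0 //.
apply/setP => e; rewrite in_set in_set0; case eA: (e \in A) => //=; exact/negbTE/Ax.
Qed.

Lemma window_valid_bdry synd i A u : window_valid inc Ew Rv tb synd i A ->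
  u \in Rv i -> (u \in bdry inc A) = (u \in synd).
Proof.
by case/andP => _ /forall_inP valid uR; rewrite -(wbdry_inl A uR); apply/eqP/valid.
Qed.

Lemma wwalk_rcons i x p e y :
  wwalk inc Ew Rv tb i x (rcons p (e, y)) =
  wwalk inc Ew Rv tb i x p &&
  [&& e \in Ew i, last x (map snd p) \in winc inc Rv tb i e & y \in winc inc Rv tb i e].
Proof. by elim: p x => [|[e' y'] p IHp] x /=; rewrite ?andbT // IHp !andbA. Qed.

Lemma walk_weight_rcons p e (y : wvert V I B) :
  walk_weight w (rcons p (e, y)) = walk_weight w p + w e.
Proof. by rewrite /walk_weight big_rcons. Qed.

Lemma wwalk_last_Rv i x p z : x \in Rv i -> wwalk inc Ew Rv tb i (inl x) p ->
  last (inl x) (map snd p) = inl z -> z \in Rv i.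
Proof.
case/lastP: p => [xR _ [<-] //|p [e y] _].
rewrite wwalk_rcons map_rcons last_rcons => /and4P [_ _ _ + /= y_z].
by rewrite y_z winc_inl => /andP [].
Qed.

End WindowGraphs.

Section SlidingWindows.
Variables (R : realFieldType) (V E I B : finType).
Variables (inc : E -> {set V}) (w : E -> R).
Variables (core Ew : I -> {set E}) (Rv : I -> {set V}) (tb : I -> E -> {set B}).
Hypothesis SW : sliding_windows inc core Ew Rv tb.

Lemma core_touch_Rv i x : [exists e in core i, x \in inc e] -> x \in Rv i.
Proof. by case: SW => _ [_ core_in _ _] /exists_inP [e /core_in/subsetP]; apply. Qed.

Lemma tb_eq0 i e : e \in Ew i -> inc e \subset Rv i -> tb i e = set0.
Proof. by case: SW => _ [_ _ _ tb_exit] eE eR; apply/eqP/negPn; rewrite tb_exit ?eR. Qed.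

Lemma notin_wbdry_inr i (A : {set E}) jb : A \subset Ew i ->
  (forall e, e \in A -> inc e \subset Rv i) -> inr jb \notin wbdry inc Rv tb i A.
Proof.
move=> AE AR; apply: notin_wbdry => e eA; case: jb => j b.
by rewrite winc_inr tb_eq0 ?inE ?andbF ?AR // (subsetP AE).
Qed.

Lemma window_valid_setIEw err i :
  window_valid inc Ew Rv tb (bdry inc err) i (err :&: Ew i).
Proof.
case: SW => _ [_ _ edge_in _]; rewrite /window_valid subsetIr.
apply/forall_inP => u uR; rewrite wbdry_inl //; apply/eqP/in_bdry_eq => e ue.
by rewrite inE andb_idr // => _; apply: edge_in uR ue.
Qed.

Lemma mwpm_wsum_le err i A : (forall e, 0 <= w e) ->
  mwpm_output inc w Ew Rv tb (bdry inc err) i A -> wsum w A <= wsum w err.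
Proof.
move=> w_ge0 [_ /(_ _ (window_valid_setIEw err i)) /le_trans]; apply.
exact/wsumS/subsetIl.
Qed.

Lemma in_combined C k e : e \in core k -> (e \in combined core C) = (e \in C k).
Proof.
case: SW => [[_ core_uniq] _] ek; apply/bigcupP/idP => [[i _ /setIP [eC ei]]|eC].
  by rewrite (core_uniq _ _ _ ek ei).
by exists k => //; rewrite inE eC.
Qed.

Lemma wbdry_closed_eq synd i j (A1 A2 U : {set E}) (S : {set V}) :
    window_valid inc Ew Rv tb synd i A1 -> window_valid inc Ew Rv tb synd j A2 ->
    S \subset Rv i -> S \subset Rv j -> (forall e, e \in U -> inc e \subset S) ->
    (forall e x, x \in S -> x \in inc e -> (e \in A1) != (e \in A2) -> e \in U) ->
  wbdry inc Rv tb i (A1 :&: U) = wbdry inc Rv tb j (A2 :&: U).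
Proof.
move=> valid1 valid2 SRi SRj US closedU.
have interior h A jb : window_valid inc Ew Rv tb synd h A -> S \subset Rv h ->
    inr jb \notin wbdry inc Rv tb h (A :&: U).
  case/andP => AE _ SR; apply: notin_wbdry_inr; first exact: subset_trans (subsetIl _ _) AE.
  by move=> e /setIP [_ /US/subset_trans]; apply.
apply/setP => [[u|jb]]; last first.
  by rewrite (negPf (interior _ _ jb valid1 SRi)) (negPf (interior _ _ jb valid2 SRj)).
have [uS|uNS] := boolP (u \in S); last first.
  have outside h A : inl u \notin wbdry inc Rv tb h (A :&: U).
    apply: notin_wbdry => e /setIP [_ eU]; rewrite winc_inl.
    by apply: contra uNS => /andP [/(subsetP (US e eU))].
  by rewrite (negPf (outside i A1)) (negPf (outside j A2)).
have [uRi uRj] := (subsetP SRi u uS, subsetP SRj u uS).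
(* [A1] and [A2] both explain [synd] at [u] and agree on its edges outside [U]. *)
have := window_valid_bdry valid1 uRi; rewrite -(window_valid_bdry valid2 uRj).
rewrite !wbdry_inl // (bdryID _ A1 U) (bdryID _ A2 U).
rewrite (in_bdry_eq (A := A1 :\: U) (A' := A2 :\: U)); first exact: addIb.
move=> e ue; rewrite !inE; case eU: (e \in U) => //=.
by apply/eqP/negPn/negP => /(closedU e u uS ue); rewrite eU.
Qed.

End SlidingWindows.

Section SeamComponent.
Variables (R : realFieldType) (V E I B : finType).
Variables (inc : E -> {set V}) (w : E -> R).
Variables (core Ew : I -> {set E}) (Rv : I -> {set V}) (tb : I -> E -> {set B}).
Hypothesis SW : sliding_windows inc core Ew Rv tb.
Hypothesis w_ge0 : forall e, 0 <= w e.
Variable wb : R.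
Hypothesis buffer : buffer_lower_bound inc w core Ew Rv tb wb.
Variable v : V.
Hypothesis v_seam : seam_vertex inc core v.

Definition verts (U : {set E}) : {set V} := v |: \bigcup_(e in U) inc e.

Lemma inc_sub_verts (U : {set E}) e : e \in U -> inc e \subset verts U.
Proof.
move=> eU; apply/subsetP => x xe; rewrite !inE; apply/orP; right.
by apply/bigcupP; exists e.
Qed.

Lemma vertsU1 (U : {set E}) e : e \notin U -> verts (e |: U) = inc e :|: verts U.
Proof. by move=> eNU; rewrite /verts big_setU1 //= setUCA. Qed.

Definition reachable_within (i : I) (U : {set E}) : Prop :=
  forall z, z \in verts U -> exists p, [/\ wwalk inc Ew Rv tb i (inl v) p,
    last (inl v) (map snd p) = inl z & walk_weight w p <= wsum w U].

Lemma reachable_within_Rv i (U : {set E}) : [exists e in core i, v \in inc e] ->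
  reachable_within i U -> verts U \subset Rv i.
Proof.
move=> v_i reachU; apply/subsetP => z /reachU [p [p_walk p_z _]].
exact: wwalk_last_Rv (core_touch_Rv SW v_i) p_walk p_z.
Qed.

Lemma exit_weight i p x e : [exists f in core i, v \in inc f] ->
  wwalk inc Ew Rv tb i (inl v) p -> last (inl v) (map snd p) = inl x ->
  x \in inc e -> ~~ (inc e \subset Rv i) -> wb <= walk_weight w p + w e.
Proof.
move=> v_i p_walk p_x xe eNR.
have xR := wwalk_last_Rv (core_touch_Rv SW v_i) p_walk p_x.
case: SW => _ [_ _ edge_in tb_exit]; have eE := edge_in i e x xR xe.
move: eNR; rewrite -tb_exit // => /set0Pn [b tb_b].
rewrite -(walk_weight_rcons w p e (inr (i, b))); apply: (buffer v_seam v_i (b := b)).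
  by rewrite wwalk_rcons p_walk eE p_x winc_inl xe xR winc_inr eqxx tb_b.
by rewrite map_rcons last_rcons.
Qed.

Lemma reachable_within0 i : [exists e in core i, v \in inc e] -> reachable_within i set0.
Proof.
move=> v_i z; rewrite /verts big_set0 setU0 inE => /eqP ->.
by exists [::]; rewrite /walk_weight /wsum big_nil big_set0.
Qed.

Lemma reachable_withinU1 i (D U : {set E}) e x : [exists f in core i, v \in inc f] ->
  wsum w D < wb -> U \subset D -> e \in D -> e \notin U ->
  reachable_within i U -> x \in verts U -> x \in inc e ->
  reachable_within i (e |: U).
Proof.
move=> v_i D_light UD eD eNU reachU xU xe.
have [q [q_walk q_x q_w]] := reachU x xU.
have xR := wwalk_last_Rv (core_touch_Rv SW v_i) q_walk q_x.
have eE : e \in Ew i by case: SW => _ [_ _ edge_in _]; apply: edge_in xR xe.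
have q_e_w : walk_weight w q + w e <= wsum w (e |: U).
  by rewrite wsumU1 // addrC lerD2l.
have eR : inc e \subset Rv i.
  apply: contraTT D_light => eNR; rewrite -leNgt.
  apply: le_trans (exit_weight v_i q_walk q_x xe eNR) _.
  by apply: le_trans q_e_w _; apply: wsumS => //; rewrite subUset sub1set eD.
move=> z; rewrite vertsU1 // inE => /orP [ze|zU].
  exists (rcons q (e, inl z)); split => //; last by rewrite walk_weight_rcons.
    by rewrite wwalk_rcons q_walk eE q_x !winc_inl xe xR ze (subsetP eR).
  by rewrite map_rcons last_rcons.
have [p [p_walk p_z p_w]] := reachU z zU; exists p; split => //.
by apply: le_trans p_w _; apply: wsumS => //; apply: subsetUr.
Qed.

Definition closed_in (D U : {set E}) : Prop :=
  forall e x, e \in D -> x \in verts U -> x \in inc e -> e \in U.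

Lemma exists_closed_reachable k l (D : {set E}) :
    [exists e in core k, v \in inc e] -> [exists e in core l, v \in inc e] ->
    wsum w D < wb ->
  exists2 U : {set E}, U \subset D &
    [/\ reachable_within k U, reachable_within l U & closed_in D U].
Proof.
move=> v_k v_l D_light.
have := reachable_within0 v_l; have := reachable_within0 v_k; have := sub0set D.
have [n] := ubnP #|D :\: set0|.
elim: n (set0 : {set E}) => // n IHn U ltUn UD reach_k reach_l.
have [|closedU] := boolP [exists e in D :\: U, [exists x in inc e, x \in verts U]].
  case/exists_inP => e /setDP [eD eNU] /exists_inP [x xe xU].
  apply: (IHn (e |: U)); last 2 first.
  - exact: reachable_withinU1 v_k D_light UD eD eNU reach_k xU xe.
  - exact: reachable_withinU1 v_l D_light UD eD eNU reach_l xU xe.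
  - rewrite -ltnS; apply: leq_trans ltUn; rewrite ltnS.
    have -> : D :\: (e |: U) = (D :\: U) :\ e.
      by apply/setP => f; rewrite !inE negb_or -andbA.
    by apply/proper_card/properD1; rewrite inE eNU.
  - by rewrite subUset sub1set eD.
exists U => //; split => // e x eD xU xe; apply: contraNT closedU => eNU.
by apply/exists_inP; exists e; rewrite ?inE ?eNU //; apply/exists_inP; exists x.
Qed.

Lemma seam_corrections_agree err (C : I -> {set E}) k l :
    (forall i, window_valid inc Ew Rv tb (bdry inc err) i (C i)) ->
    consistent inc core Rv tb C -> adjacent inc core k l ->
    [exists e in core k, v \in inc e] -> [exists e in core l, v \in inc e] ->
    wsum w (C k) + wsum w (C l) < wb ->
  forall e, v \in inc e -> (e \in C k) = (e \in C l).
Proof.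
move=> valid consistentC adj_kl v_k v_l light e ve.
pose D := (C k :\: C l) :|: (C l :\: C k).
have D_light : wsum w D < wb.
  apply: le_lt_trans light; apply: le_trans (wsumU w_ge0 _ _).
  by apply: wsumS => //; rewrite setUSS // subsetDl.
have [U UD [reach_k reach_l closedU]] := exists_closed_reachable v_k v_l D_light.
have CU : C k :&: U = C l :&: U.
  apply: consistentC adj_kl _ _ (subsetIl _ _) (subsetIl _ _) _.
  apply: (wbdry_closed_eq SW (valid k) (valid l) (reachable_within_Rv v_k reach_k)
    (reachable_within_Rv v_l reach_l) (@inc_sub_verts U)).
  move=> f x xU xf Ckl; apply: closedU xU xf.
  by move: Ckl; rewrite !inE; case: (f \in C k); case: (f \in C l).
have [eD|] := boolP (e \in D); last first.
  by rewrite !inE; case: (e \in C k); case: (e \in C l).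
have eU := closedU e v eD (setU11 _ _) ve.
by move/setP/(_ e): CU; rewrite !inE eU !andbT.
Qed.

End SeamComponent.

Theorem theorem1 (R : realFieldType) (V E I B : finType)
  (inc : E -> {set V}) (w : E -> R)
  (core Ew : I -> {set E}) (Rv : I -> {set V}) (tb : I -> E -> {set B})
  (C : I -> {set E}) (err : {set E}) :
  (forall e, 0 < w e) ->
  matching_graph inc Ew Rv tb ->
  sliding_windows inc core Ew Rv tb ->
  (forall i, mwpm_output inc w Ew Rv tb (bdry inc err) i (C i)) ->
  consistent inc core Rv tb C ->
  seam_syndrome inc core C err != set0 ->
  forall wb : R, buffer_lower_bound inc w core Ew Rv tb wb ->
  wb / 2 <= wsum w err.
Proof.
move=> w_gt0 _ SW mwpmC consistentC syndrome wb buffer.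
have w_ge0 e : 0 <= w e := ltW (w_gt0 e).
have validC i := (mwpmC i).1.
rewrite leNgt; apply/negP => err_light.
have pair_light k l : wsum w (C k) + wsum w (C l) < wb.
  have := mwpm_wsum_le SW w_ge0 (mwpmC k); have := mwpm_wsum_le SW w_ge0 (mwpmC l).
  lra.
have /set0Pn [v] := syndrome; rewrite inE => /andP [v_seam v_unexplained].
have /existsP [i0 /existsP [j0 /and3P [_ v_i0 _]]] := v_seam.
have agree k f : f \in core k -> v \in inc f -> (f \in C k) = (f \in C i0).
  move=> fk vf.
  have v_k : [exists e in core k, v \in inc e] by apply/exists_inP; exists f.
  have [-> //|ne] := eqVneq k i0.
  apply: (seam_corrections_agree SW w_ge0 buffer v_seam validC consistentC) => //.
  by apply/existsP; exists v; rewrite /seam_of ne v_k v_i0.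
have combined_v : (v \in bdry inc (combined core C)) = (v \in bdry inc err).
  rewrite -(window_valid_bdry (validC i0) (core_touch_Rv SW v_i0)).
  apply: in_bdry_eq => f vf; have [[cover _] _] := SW; have [k fk] := cover f.
  by rewrite (in_combined SW C fk) (agree k f fk vf).
by rewrite combined_v eqxx in v_unexplained.
Qed.
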